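(* Let $n,k$ be integers with $1\le k<n$, let $F$ be a finite field with $|F|\ge 2n$, and let $\{\lambda_{i,j}: i\in[n],\ j\in\{0,1\}\}$ be $2n$ distinct elements of $F$. Let $\mathcal{C}$ be the set of all tuples $C=(C_1,\dots,C_n)$ with $C_i=(c_{i,b,a}: b\in\{1,2,3\},\ a\in\{0,1,\dots,2^n-1\})\in F^{3\cdot 2^n}$ satisfying $$\sum_{i=1}^n \lambda_{i,a_i}^t\, c_{i,b,a}=0\quad\text{for all } t\in\{0,1,\dots,n-k-1\},\ b\in\{1,2,3\},\ a\in\{0,1,\dots,2^n-1\},$$ where $(a_1,\dots,a_n)\in\{0,1\}^n$ is the $n$-digit binary expansion of $a$. Then $\mathcal{C}$ is an $(n,k,l=3\cdot 2^n)$ MDS array code which is a $(2,k+1)$-MSR code under the cooperative model, i.e. for every $\mathcal{F}\subseteq[n]$ with $|\mathcal{F}|=2$ and every $\mathcal{R}\subseteq[n]\setminus\mathcal{F}$ with $|\mathcal{R}|=k+1$, the nodes $\{C_i:i\in\mathcal{F}\}$ can be cooperatively repaired from $\{C_j: j\in\mathcal{R}\}$ with total bandwidth $\frac{2(k+2)l}{3}=2(k+2)2^n$ symbols of $F$.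
   Context: $[n]=\{1,\dots,n\}$. An $(n,k,l)$ MDS array code over $F$ is a set of codewords $C=(C_1,\dots,C_n)$ with each node $C_i\in F^l$, forming an $F$-linear code of dimension $kl$, such that the contents of any $k$ nodes determine the whole codeword. Cooperative repair model: given a set $\mathcal{F}$ of failed nodes and a disjoint set $\mathcal{R}$ of helper nodes, each failed node downloads symbols of $F$ computed from the contents of the helper nodes, and the failed nodes may additionally exchange symbols of $F$ computed from the data they hold (their downloaded data) with each other; at the end each failed node $C_i$, $i\in\mathcal{F}$, must be able to recover its full content. $N_{\mathrm{co}}(\mathcal{C},\mathcal{F},\mathcal{R})$ is the minimum, over such schemes, of the total number of symbols of $F$ transmitted between any two distinct nodes (helper-to-failed and failed-to-failed). A code $\mathcal{C}$ is an $(h,d)$-MSR code under the cooperative model if it is an MDS array code and for all $\mathcal{F}\subseteq[n]$, $|\mathcal{F}|=h$, and $\mathcal{R}\subseteq[n]\setminus\mathcal{F}$, $|\mathcal{R}|=d$, one has $N_{\mathrm{co}}(\mathcal{C},\mathcal{F},\mathcal{R})=\frac{h(d+h-1)l}{h+d-k}$ (this value is a known lower bound for any MDS array code). *)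

From HB Require Import structures.
From mathcomp Require Import all_boot all_order all_algebra.
Set Implicit Arguments. Unset Strict Implicit. Unset Printing Implicit Defensive.
Import GRing.Theory.
Local Open Scope ring_scope.

(* A codeword of an (n,k,l) array code over F is an n x l matrix:
   row i (i : 'I_n) is the content C_{i+1} in F^l of node i+1.
   A code is a predicate (set) of such matrices. *)

Section ArrayCodes.
Variable F : fieldType.

Definition linear_code_of_dim (n l d : nat) (C : pred 'M[F]_(n, l)) : Prop :=
  exists V : {vspace 'M[F]_(n, l)}, (forall c, (c \in V) = C c) /\ \dim V = d.

Definition MDS_array_code (n k l : nat) (C : pred 'M[F]_(n, l)) : Prop :=
  linear_code_of_dim (k * l) C /\
  forall S : {set 'I_n}, #|S| = k ->
    forall c c' : 'M[F]_(n, l), C c -> C c' ->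
      (forall i, i \in S -> row i c = row i c') -> c = c'.

(* Cooperative repair scheme (arbitrary, not necessarily linear, functions).
   - dl j i : the symbols helper j sends to failed node i, a function of the
     content of node j, of fixed length dl_size j i;
   - ex i' i : the symbols failed node i' sends to failed node i, a function
     of the data downloaded by i' (indexed by helper), of fixed length
     ex_size i' i;
   - rec i : the recovery map of failed node i, from its downloaded data and
     the data received from the other failed nodes. *)
Record coop_scheme (n l : nat) := CoopScheme {
  dl_size : 'I_n -> 'I_n -> nat;
  dl : 'I_n -> 'I_n -> 'rV[F]_l -> seq F;
  ex_size : 'I_n -> 'I_n -> nat;
  ex : 'I_n -> 'I_n -> ('I_n -> seq F) -> seq F;
  rec : 'I_n -> ('I_n -> seq F) -> ('I_n -> seq F) -> 'rV[F]_l
}.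

Variables (n l : nat).
Implicit Types (S : coop_scheme n l) (Fs Rs : {set 'I_n}).

Definition downloaded S Rs (c : 'M[F]_(n, l)) (i : 'I_n) : 'I_n -> seq F :=
  fun j => if j \in Rs then dl S j i (row j c) else [::].

Definition received S Fs Rs (c : 'M[F]_(n, l)) (i : 'I_n) : 'I_n -> seq F :=
  fun i' => if (i' \in Fs) && (i' != i)
            then ex S i' i (downloaded S Rs c i') else [::].

Definition valid_coop_scheme (C : pred 'M[F]_(n, l)) Fs Rs S : Prop :=
  (forall i j x, size (dl S j i x) = dl_size S j i) /\
  (forall i' i D, size (ex S i' i D) = ex_size S i' i) /\
  (forall c, C c -> forall i, i \in Fs ->
     rec S i (downloaded S Rs c i) (received S Fs Rs c i) = row i c).

Definition coop_bandwidth Fs Rs S : nat :=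
  (\sum_(i in Fs) \sum_(j in Rs) dl_size S j i
   + \sum_(i in Fs) \sum_(i' in Fs | i' != i) ex_size S i' i)%N.

Definition is_N_co (C : pred 'M[F]_(n, l)) Fs Rs (N : nat) : Prop :=
  (exists S, valid_coop_scheme C Fs Rs S /\ coop_bandwidth Fs Rs S = N) /\
  (forall S, valid_coop_scheme C Fs Rs S -> (N <= coop_bandwidth Fs Rs S)%N).

(* (h,d)-MSR code under the cooperative model:
   N_co = h(d+h-1)l/(h+d-k), written without division. *)
Definition coop_MSR (k h d : nat) (C : pred 'M[F]_(n, l)) : Prop :=
  MDS_array_code k C /\
  forall Fs Rs : {set 'I_n}, #|Fs| = h -> [disjoint Fs & Rs] -> #|Rs| = d ->
    exists N, is_N_co C Fs Rs N /\ (N * (h + d - k) = h * (d + h - 1) * l)%N.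

End ArrayCodes.

(* binary digit i (0-indexed, least significant first) of a:
   a = \sum_(i < n) bit i a * 2^i for a < 2^n *)
Definition bit (i a : nat) : bool := odd (a %/ 2 ^ i).

(* A coordinate j : 'I_(3*2^n)
   of a node encodes the pair (b, a) with b = j %/ 2^n (in {0,1,2}, standing
   for {1,2,3}) and a = j %% 2^n; the constraint does not depend on b.
   Node i (0-indexed) uses the digit a_{i+1} = bit i a and
   lam i false / lam i true stand for lambda_{i+1,0} / lambda_{i+1,1}. *)
Definition coop_code (F : fieldType) (n k : nat) (lam : 'I_n -> bool -> F)
  : pred 'M[F]_(n, 3 * 2 ^ n) :=
  fun c => [forall t : 'I_(n - k), forall j : 'I_(3 * 2 ^ n),
              \sum_(i < n) (lam i (bit i (j %% 2 ^ n))) ^+ t * c i j == 0].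

From HB Require Import structures.
From mathcomp Require Import all_boot all_order all_algebra.
From mathcomp Require Import zify ring.
From Stdlib Require Import FunctionalExtensionality.
Set Implicit Arguments. Unset Strict Implicit. Unset Printing Implicit Defensive.
Import GRing.Theory.

(* Index the 3 * 2^n symbols of a node by a layer b < 3 and a word a < 2^n.  Two
   symbols whose words differ exactly in digit w are coupled: adding their parity checks
   gives a vanishing power sum over the 2n distinct points lam i x, supported on at most
   n - k of them.  Hence, once the k + 1 helpers' sums of such a pair are known, so are
   the sums of every other node, and both symbols of node w.
   Failed node u downloads from every helper the 2^n sums of the layer-0 and layer-1
   pairs coupled along digit u: this gives its layers 0 and 1, and the same sums for v.
   Failed node v downloads the sums pairing layer 2 at a with layer 1 - a_u at a with
   digit v flipped: this gives its layer 2 and its layer 1 - a_u, and the same sums for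
   u.  Exchanging these 2^n sums both ways completes both repairs, using 2 (k + 2) 2^n
   symbols in total.
   Conversely, counting codewords shows that in any valid scheme two helpers and the
   other failed node send a failed node at least l symbols, and three helpers send the
   two failed nodes at least 2 l symbols; averaging over all pairs and triples of
   helpers gives the matching lower bound. *)

Local Open Scope ring_scope.

Section PowerSums.
Variables (F : fieldType) (I : finType) (z : I -> F).
Hypothesis z_inj : injective z.

Lemma power_sums_eq0 (w : I -> F) (J : {set I}) (r : nat) :
  (forall p, p \notin J -> w p = 0) -> (#|J| <= r)%N ->
  (forall t, (t < r)%N -> \sum_p z p ^+ t * w p = 0) -> forall p, w p = 0.
Proof.
move=> w0 cJ hs p0; case: (boolP (p0 \in J)) => Jp0; last exact: w0.
pose P := \prod_(q <- enum (J :\ p0)) ('X - (z q)%:P).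
have sP : (size P <= r)%N.
  by rewrite size_prod_XsubC -cardE; move: cJ; rewrite (cardsD1 p0 J) Jp0.
have P_w : \sum_p P.[z p] * w p = 0.
  under eq_bigr do rewrite horner_coef mulr_suml.
  rewrite exchange_big /=; apply: big1 => t _.
  transitivity (P`_t * \sum_p z p ^+ t * w p).
    by rewrite mulr_sumr; apply: eq_bigr => p _; rewrite mulrA.
  by rewrite hs ?mulr0 //; exact: leq_trans (ltn_ord t) sP.
have P_root q : q \in J -> q != p0 -> P.[z q] = 0.
  move=> Jq qp0; apply/eqP; rewrite -/(root P (z q)).
  rewrite /P -(big_map z xpredT (fun a => 'X - a%:P)) root_prod_XsubC.
  by apply: map_f; rewrite mem_enum in_setD1 qp0.
move: P_w; rewrite (bigD1 p0) //= big1 ?addr0 => [/eqP|q qp0]; last first.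
  by case: (boolP (q \in J)) => Jq; [rewrite P_root ?mul0r | rewrite w0 ?mulr0].
rewrite mulf_eq0 => /orP [|/eqP //].
rewrite horner_prod prodf_seq_eq0 => /hasP [q].
rewrite mem_enum in_setD1 => /andP [qp0 _] /=.
by rewrite hornerXsubC subr_eq0 => /eqP /z_inj qp; rewrite qp eqxx in qp0.
Qed.

Lemma power_sums_onto (J : {set I}) (r : nat) (y : 'I_r -> F) : #|J| = r ->
  exists w : I -> F, (forall p, p \notin J -> w p = 0) /\
    forall t : 'I_r, \sum_p z p ^+ t * w p = y t.
Proof.
move=> cJ; subst r.
pose V := Vandermonde #|J| (\row_s z (@enum_val _ (pred_of_set J) s)).
have V_unit : V \in unitmx.
  rewrite unitmxE det_Vandermonde unitfE; apply/prodf_neq0 => s _.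
  apply/prodf_neq0 => s' lt_ss'; rewrite !mxE subr_eq0.
  by apply: contraTneq lt_ss' => /z_inj /enum_val_inj ->; rewrite ltnn.
pose W := invmx V *m \col_t y t.
exists (fun p => \sum_s (enum_val s == p)%:R * W s 0); split.
  move=> p Jp; apply: big1 => s _.
  by case: eqP => [ep|_]; [move: Jp; rewrite -ep enum_valP | rewrite mul0r].
move=> t; transitivity ((V *m W) t 0); last by rewrite mulKVmx // mxE.
rewrite mxE; under eq_bigr do rewrite mulr_sumr.
rewrite exchange_big /=; apply: eq_bigr => s _.
rewrite (bigD1 (enum_val s)) //= eqxx mul1r big1 ?addr0 ?mxE // => p.
by rewrite eq_sym => /negbTE ->; rewrite mul0r mulr0.
Qed.

End PowerSums.

Local Close Scope ring_scope.

Definition flip (w a : nat) : nat := if bit w a then a - 2 ^ w else a + 2 ^ w.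

Lemma divnDX w a : (a + 2 ^ w) %/ 2 ^ w = (a %/ 2 ^ w).+1.
Proof. by rewrite -{1}(mul1n (2 ^ w)) divnDMl ?expn_gt0 // addn1. Qed.

Lemma bit_addX w a i : ~~ bit w a -> bit i (a + 2 ^ w) = (i == w) (+) bit i a.
Proof.
rewrite /bit => aw0; case: (ltngtP i w) => [lt_iw|lt_wi|->]; last by rewrite divnDX.
- rewrite -(subnK (ltnW lt_iw)) expnD divnDMl ?expn_gt0 // oddD oddX.
  by rewrite subn_eq0 leqNgt lt_iw /= addbF.
- rewrite -(subnKC (ltnW lt_wi)) expnD !divnMA divnDX.
  have [s ->] : exists s, i - w = s.+1 by exists (i - w).-1; rewrite prednK // subn_gt0.
  have half_succ : (a %/ 2 ^ w).+1 %/ 2 = a %/ 2 ^ w %/ 2.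
    rewrite {1}(divn_eq (a %/ 2 ^ w) 2) modn2 (negbTE aw0) addn0 -addn1.
    by rewrite divnMDl // (@divn_small 1 2) // addn0.
  by rewrite expnS !divnMA half_succ.
Qed.

Lemma bit_leX w a : bit w a -> 2 ^ w <= a.
Proof. by rewrite leqNgt; apply: contraL => /divn_small; rewrite /bit => ->. Qed.

Lemma bit_flip i w a : bit i (flip w a) = (i == w) (+) bit i a.
Proof.
rewrite /flip; case: ifPn => [/[dup] aw /bit_leX le_wa|/bit_addX //].
have a'w0 : ~~ bit w (a - 2 ^ w).
  by move: aw; rewrite /bit -{1}(subnK le_wa) divnDX.
by rewrite -{2}(subnK le_wa) (bit_addX _ a'w0) addbA addbb.
Qed.

Lemma flipK w : involutive (flip w).
Proof.
move=> a; rewrite {1}/flip bit_flip eqxx /flip.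
by case aw: (bit w a) => /=; rewrite ?addnK // subnK // bit_leX ?aw.
Qed.

Lemma flip_ltn n w a : w < n -> a < 2 ^ n -> flip w a < 2 ^ n.
Proof.
move=> lt_wn lt_an; rewrite /flip; case: ifPn => [_|aw0].
  exact: leq_ltn_trans (leq_subr _ _) lt_an.
move: lt_an; rewrite -(subnK (ltnW lt_wn)) expnD -!ltn_divLR ?expn_gt0 // divnDX.
move=> lt_q; rewrite ltn_neqAle lt_q andbT; apply: contraNneq aw0 => q_eq.
by move: (congr1 odd q_eq); rewrite /= oddX subn_eq0 leqNgt lt_wn => /negbFE.
Qed.

Lemma subset_sum_average (T : finType) (R : {set T}) (f : T -> nat) (s N : nat) :
  0 < s <= #|R| -> (forall S : {set T}, S \subset R -> #|S| = s -> N <= \sum_(x in S) f x) ->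
  #|R| * N <= s * \sum_(x in R) f x.
Proof.
move=> /andP [s_gt0 le_sR] sumS; have m_gt0 : 0 < #|R| := leq_trans s_gt0 le_sR.
pose shift (t i : 'I_#|R|) : 'I_#|R| := Ordinal (ltn_pmod (i + t) m_gt0).
have shift_inj t : injective (shift t).
  move=> i i' /(congr1 val) /eqP; rewrite /= eqn_modDr !modn_small //.
  by move=> /eqP /val_inj.
have shift_injr i : injective (fun t => shift t i).
  move=> t t' /(congr1 val) /eqP; rewrite /= eqn_modDl !modn_small //.
  by move=> /eqP /val_inj.
pose e (i : 'I_#|R|) : T := enum_val i.
(* The cyclic windows of s consecutive elements of an enumeration of R are s-subsets
   of R covering each element exactly s times. *)
pose window (i : 'I_#|R|) := [set e (shift (widen_ord le_sR t) i) | t : 'I_s].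
have sum_window i : \sum_(x in window i) f x = \sum_(t < s) f (e (shift (widen_ord le_sR t) i)).
  by rewrite big_imset //= => t t' _ _ /enum_val_inj /shift_injr [] /val_inj.
have card_window i : #|window i| = s.
  by rewrite card_imset ?card_ord // => t t' /enum_val_inj /shift_injr [] /val_inj.
have window_sub i : window i \subset R.
  by apply/subsetP => _ /imsetP [t _ ->]; apply: enum_valP.
apply: (@leq_trans (\sum_(i < #|R|) \sum_(x in window i) f x)).
  rewrite -[X in X * N]card_ord -sum_nat_const; apply: leq_sum => i _; exact: sumS.
rewrite (eq_bigr _ (fun i _ => sum_window i)) exchange_big /= [X in _ * X]big_enum_val.
have sum_shift t : \sum_i f (e (shift t i)) = \sum_i f (e i).
  by rewrite [RHS](reindex_inj (shift_inj t)).
by rewrite (eq_bigr _ (fun t _ => sum_shift _)) sum_nat_const card_ord.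
Qed.

Lemma leq_card_seq (T X : finType) (phi : X -> seq T) (m : nat) :
  (forall x, size (phi x) = m) -> injective phi -> #|X| <= #|T| ^ m.
Proof.
move=> size_phi phi_inj; rewrite -card_tuple.
apply: (@leq_card _ _ (fun x => Tuple (introT eqP (size_phi x)))) => x y /(congr1 val).
exact: phi_inj.
Qed.

Section Positions.
Variable n : nat.
Local Notation l := (3 * 2 ^ n).

Lemma l_gt0 : 0 < l. Proof. by rewrite muln_gt0 expn_gt0. Qed.

Definition pos (b a : nat) : 'I_l := Ordinal (ltn_pmod (b * 2 ^ n + a) l_gt0).

Lemma pos_val b a : b < 3 -> a < 2 ^ n -> pos b a = b * 2 ^ n + a :> nat.
Proof. by move=> lt_b3 lt_an; rewrite /= modn_small //; nia. Qed.

Lemma pos_mod b a : b < 3 -> a < 2 ^ n -> pos b a %% 2 ^ n = a.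
Proof. by move=> lt_b3 lt_an; rewrite pos_val // modnMDl modn_small. Qed.

Lemma pos_cases (P : 'I_l -> Prop) :
  (forall (x : bool) a, a < 2 ^ n -> P (pos x a)) -> (forall a, a < 2 ^ n -> P (pos 2 a)) ->
  forall j, P j.
Proof.
move=> Pbool P2 j; have lt_a : j %% 2 ^ n < 2 ^ n by rewrite ltn_mod expn_gt0.
have lt_b : j %/ 2 ^ n < 3 by rewrite ltn_divLR ?expn_gt0.
have -> : j = pos (j %/ 2 ^ n) (j %% 2 ^ n) by apply: ord_inj; rewrite pos_val // -divn_eq.
move: lt_b; case: (j %/ 2 ^ n) => [|[|[|//]]] _; last exact: P2.
  exact: (Pbool false).
exact: (Pbool true).
Qed.

End Positions.

Local Open Scope ring_scope.

Lemma coop_bandwidth_const (F : fieldType) (n l : nat) (S : coop_scheme F n l)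
    (Fs Rs : {set 'I_n}) (s s' : nat) :
  (forall j i, dl_size S j i = s) -> (forall i' i, ex_size S i' i = s') ->
  coop_bandwidth Fs Rs S = (#|Fs| * #|Rs| * s + #|Fs| * (#|Fs| - 1) * s')%N.
Proof.
move=> dl_s ex_s; rewrite /coop_bandwidth.
under eq_bigr do under eq_bigr do rewrite dl_s.
under [X in (_ + X)%N]eq_bigr => i Fi.
  under eq_bigr do rewrite ex_s.
  rewrite sum_nat_const (eq_card (B := Fs :\ i)) => [|i']; last by rewrite in_setD1 andbC.
  have -> : #|Fs :\ i| = (#|Fs| - 1)%N by rewrite (cardsD1 i Fs) Fi add1n subn1.
  over.
by rewrite !sum_nat_const !mulnA.
Qed.

Section DecodingScheme.
Variables (F : finFieldType) (n l : nat) (C : pred 'M[F]_(n, l)) (Fs Rs : {set 'I_n}).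
Variables (dl_sz : 'I_n -> 'I_n -> nat) (dl : 'I_n -> 'I_n -> 'rV[F]_l -> seq F).
Variables (ex_sz : 'I_n -> 'I_n -> nat) (msg : 'I_n -> 'I_n -> 'M[F]_(n, l) -> seq F).

Definition dl_from (c : 'M[F]_(n, l)) (i j : 'I_n) : seq F :=
  if j \in Rs then dl j i (row j c) else [::].

Definition consistent (c : 'M[F]_(n, l)) (i : 'I_n) (D : 'I_n -> seq F) : bool :=
  C c && [forall j, dl_from c i j == D j].

(* Messages and recovery maps decode by choosing any codeword consistent with the data
   at hand, so the scheme is valid as soon as these data determine the message or the
   lost row. *)
Definition msg_from (i' i : 'I_n) (D : 'I_n -> seq F) : seq F :=
  msg i' i (odflt 0 [pick c | consistent c i' D]).

Definition received_from (c : 'M[F]_(n, l)) (i i' : 'I_n) : seq F :=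
  if (i' \in Fs) && (i' != i) then msg_from i' i (dl_from c i') else [::].

Definition recover (i : 'I_n) (D E : 'I_n -> seq F) : 'rV[F]_l :=
  row i (odflt 0 [pick c | consistent c i D && [forall i', received_from c i i' == E i']]).

Definition decoding_scheme := CoopScheme dl_sz dl ex_sz msg_from recover.

Hypothesis dl_sizeE : forall i j x, size (dl j i x) = dl_sz j i.
Hypothesis msg_sizeE : forall i' i c, size (msg i' i c) = ex_sz i' i.
Hypothesis msg_determined : forall i i', i \in Fs -> i' \in Fs -> i' != i ->
  forall c1 c2, C c1 -> C c2 -> dl_from c1 i' =1 dl_from c2 i' -> msg i' i c1 = msg i' i c2.
Hypothesis row_determined : forall i, i \in Fs ->
  forall c1 c2, C c1 -> C c2 -> dl_from c1 i =1 dl_from c2 i ->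
  (forall i', i' \in Fs -> i' != i -> msg i' i c1 = msg i' i c2) -> row i c1 = row i c2.

Lemma msg_from_dl c i i' : C c -> i \in Fs -> i' \in Fs -> i' != i ->
  msg_from i' i (dl_from c i') = msg i' i c.
Proof.
move=> Cc Fi Fi' i'i; rewrite /msg_from; case: pickP => [c' /andP [Cc' /forallP dl_c'] | no_c].
  by apply: msg_determined => // j; apply/eqP.
by have /andP [] := negbT (no_c c); split=> //; apply/forallP.
Qed.

Lemma decoding_scheme_valid : valid_coop_scheme C Fs Rs decoding_scheme.
Proof.
split; first exact: dl_sizeE.
split=> [i' i D|c Cc i Fi]; first exact: msg_sizeE.
rewrite /= /recover; case: pickP => [c' | no_c]; last first.
  suff : consistent c i (dl_from c i) && [forall i', received_from c i i' == received_from c i i'].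
    by rewrite no_c.
  by rewrite /consistent Cc; apply/andP; split; apply/forallP.
case/andP=> /andP [Cc' /forallP dl_c'] /forallP rec_c'.
apply: row_determined => // [j|i' Fi' i'i]; first exact/eqP/dl_c'.
have := eqP (rec_c' i'); rewrite /received_from /received Fi' i'i /=.
by rewrite !msg_from_dl.
Qed.

End DecodingScheme.

Section CutSet.
Variables (F : finFieldType) (n l : nat) (C : pred 'M[F]_(n, l)) (Fs Rs : {set 'I_n}).
Variable S : coop_scheme F n l.
Hypothesis S_valid : valid_coop_scheme C Fs Rs S.

Lemma repair_row_eq c1 c2 i : C c1 -> C c2 -> i \in Fs ->
  downloaded S Rs c1 i = downloaded S Rs c2 i ->
  (forall i', i' \in Fs -> i' != i ->
     ex S i' i (downloaded S Rs c1 i') = ex S i' i (downloaded S Rs c2 i')) ->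
  row i c1 = row i c2.
Proof.
move=> C1 C2 Fi dl12 ex12; have [_ [_ rec_ok]] := S_valid.
rewrite -(rec_ok c1) // -(rec_ok c2) // dl12; congr (rec S i _ _).
apply: functional_extensionality => i'; rewrite /received.
by case: (boolP (i' \in Fs)) => //= Fi'; case: (boolP (i' != i)) => //= /(ex12 _ Fi').
Qed.

Definition dl_obs (T : {set 'I_n}) (i : 'I_n) (c : 'M[F]_(n, l)) : seq F :=
  flatten [seq dl S j i (row j c) | j <- enum T].

Lemma size_dl_obs T i c : size (dl_obs T i c) = (\sum_(j in T) dl_size S j i)%N.
Proof.
have [size_dl _] := S_valid.
rewrite size_flatten /shape -map_comp sumnE big_map big_enum.
by apply: eq_bigr => j _; rewrite /= size_dl.
Qed.

Lemma dl_obs_downloaded (T : {set 'I_n}) i c1 c2 :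
  (forall j, j \in Rs :\: T -> row j c1 = row j c2) -> dl_obs T i c1 = dl_obs T i c2 ->
  downloaded S Rs c1 i = downloaded S Rs c2 i.
Proof.
have [size_dl _] := S_valid.
move=> eq_out eq_obs; apply: functional_extensionality => j; rewrite /downloaded.
case: ifP => // Rj; case: (boolP (j \in T)) => Tj; last by rewrite eq_out // inE Tj.
have shapeE c : shape [seq dl S j i (row j c) | j <- enum T] = [seq dl_size S j i | j <- enum T].
  by rewrite /shape -map_comp; apply: eq_map => j'; exact: size_dl.
move: eq_obs; rewrite /dl_obs => /(congr1 (reshape [seq dl_size S j i | j <- enum T])).
by rewrite -{1}(shapeE c1) -(shapeE c2) !flattenK => /eq_in_map; apply; rewrite mem_enum.
Qed.

End CutSet.

Section Code.
Variables (F : fieldType) (n k : nat) (lam : 'I_n -> bool -> F).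
Hypothesis lam_inj : injective (fun p : 'I_n * bool => lam p.1 p.2).
Local Notation l := (3 * 2 ^ n)%N.
Local Notation code := (coop_code k lam).

Definition point (j : 'I_l) (i : 'I_n) : F := lam i (bit i (j %% 2 ^ n)).

Lemma point_inj j : injective (point j).
Proof. by move=> i1 i2 /(@lam_inj (i1, _) (i2, _)) []. Qed.

Definition syndrome (c : 'M[F]_(n, l)) : 'M[F]_(n - k, l) :=
  \matrix_(t, j) \sum_i point j i ^+ t * c i j.

Lemma syndrome_is_linear : linear syndrome.
Proof.
move=> a c c'; apply/matrixP => t j; rewrite !mxE mulr_sumr -big_split /=.
by apply: eq_bigr => i _; rewrite !mxE mulrDr mulrCA.
Qed.
HB.instance Definition _ :=
  GRing.isLinear.Build F 'M[F]_(n, l) 'M[F]_(n - k, l) _ syndrome syndrome_is_linear.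

Lemma coop_codeE c : code c = (syndrome c == 0).
Proof.
apply/forallP/eqP => [code_c | syn0 t]; last first.
  by apply/forallP => j; move/matrixP/(_ t j): syn0; rewrite !mxE => ->.
by apply/matrixP => t j; rewrite !mxE; apply/eqP/(forallP (code_c t)).
Qed.

Lemma code_power_sums c (t : nat) j : code c -> (t < n - k)%N ->
  \sum_i point j i ^+ t * c i j = 0.
Proof.
move=> code_c lt_t; move: code_c; rewrite coop_codeE => /eqP /matrixP /(_ (Ordinal lt_t) j).
by rewrite !mxE.
Qed.

Lemma code_sub c c' : code c -> code c' -> code (c - c').
Proof. by rewrite !coop_codeE linearB /= => /eqP -> /eqP ->; rewrite subrr. Qed.

Lemma code_eq0 (S : {set 'I_n}) c :
  code c -> (k <= #|S|)%N -> (forall i, i \in S -> row i c = 0) -> c = 0.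
Proof.
move=> code_c le_kS c_S; apply/matrixP => i j; rewrite mxE.
apply: (power_sums_eq0 (@point_inj j) (w := c^~ j) (J := ~: S) (r := n - k)).
- by move=> p; rewrite inE negbK => /c_S /rowP /(_ j); rewrite !mxE.
- by rewrite cardsCs setCK card_ord leq_sub2l.
- by move=> t; apply: code_power_sums.
Qed.

Lemma code_interpolate (K : {set 'I_n}) (x : 'M[F]_(n, l)) (Y : 'M[F]_(n - k, l)) :
  #|K| = k -> exists c, syndrome c = Y /\ forall i, i \in K -> row i c = row i x.
Proof.
move=> cK; have cKC : #|~: K| = (n - k)%N by rewrite cardsCs setCK card_ord cK.
have /fin_all_exists [W W_spec] (j : 'I_l) := power_sums_onto (@point_inj j)
  (fun t => Y t j - \sum_(i in K) point j i ^+ t * x i j) cKC.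
exists (\matrix_(i, j) ((if i \in K then x i j else 0) + W j i)); split.
  apply/matrixP => t j; rewrite mxE; under eq_bigr do rewrite mxE mulrDr.
  rewrite big_split /= (proj2 (W_spec j)) addrC -addrA [X in Y t j + X]addrC.
  rewrite [X in _ - X]big_mkcond -sumrB big1 ?addr0 // => i _.
  by case: ifP; rewrite ?mulr0 subrr.
by move=> i Ki; apply/rowP => j; rewrite !mxE Ki (proj1 (W_spec j)) ?addr0 // inE Ki.
Qed.

Lemma code_extend (K : {set 'I_n}) (x : 'M[F]_(n, l)) :
  #|K| = k -> exists c, code c /\ forall i, i \in K -> row i c = row i x.
Proof.
move=> cK; have [c [syn_c c_K]] := code_interpolate x 0 cK.
by exists c; rewrite coop_codeE syn_c.
Qed.

Lemma code_dim : (k <= n)%N -> linear_code_of_dim (k * l) code.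
Proof.
move=> le_kn; exists (lker (linfun syndrome)); split.
  by move=> c; rewrite memv_ker lfunE coop_codeE.
have syn_onto : (linfun syndrome @: fullv)%VS = fullv.
  apply/vspaceP => Y; rewrite memvf; apply/memv_imgP.
  pose K := [set widen_ord le_kn i | i : 'I_k].
  have cK : #|K| = k.
    by rewrite card_imset ?card_ord // => i i' [] /val_inj.
  have [c [syn_c _]] := code_interpolate 0 Y cK.
  by exists c; rewrite ?memvf // lfunE.
have := limg_ker_dim (linfun syndrome) fullv; rewrite capfv syn_onto !dimvf /=.
by rewrite /dim /= => dimE; apply/eqP; rewrite -(eqn_add2r ((n - k) * l)) dimE -mulnDl subnKC.
Qed.

Lemma code_MDS : (k <= n)%N -> MDS_array_code k code.
Proof.
move=> le_kn; split; first exact: code_dim.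
move=> S cS c c' code_c code_c' eq_S; apply/eqP; rewrite -subr_eq0; apply/eqP.
apply: (code_eq0 (S := S)); rewrite ?cS ?code_sub // => i Si.
by rewrite linearB /= eq_S ?subrr.
Qed.

Lemma paired_columns_eq0 (R : {set 'I_n}) (w : 'I_n) (d : 'M[F]_(n, l)) (j1 j2 : 'I_l) :
  code d -> #|R| = k.+1 -> w \notin R ->
  (forall i : 'I_n, bit i (j2 %% 2 ^ n) = (i == w) (+) bit i (j1 %% 2 ^ n)) ->
  (forall i, i \in R -> d i j1 + d i j2 = 0) ->
  [/\ forall i, i != w -> d i j1 + d i j2 = 0, d w j1 = 0 & d w j2 = 0].
Proof.
move=> code_d cR Rw bits dR.
set a1 := (j1 %% 2 ^ n)%N in bits; set a2 := (j2 %% 2 ^ n)%N in bits.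
(* W is supported on J, and its power sums add up the parity checks of columns j1
   and j2. *)
pose W (p : 'I_n * bool) :=
  (bit p.1 a1 == p.2)%:R * d p.1 j1 + (bit p.1 a2 == p.2)%:R * d p.1 j2.
pose J := [set (i, bit i a1) | i : 'I_n in ~: R] :|: [set (w, bit w a2)].
have cJ : (#|J| <= n - k)%N.
  apply: leq_trans (leq_card_setU _ _) _.
  rewrite cards1 card_imset => [|i i' [] //]; rewrite cardsCs setCK card_ord cR.
  by have := max_card (mem R); rewrite cR card_ord; lia.
have W0 p : W p = 0.
  apply: (power_sums_eq0 lam_inj (J := J) (r := n - k)) => // [[i x]|t lt_t].
    rewrite in_setU in_set1 negb_or => /andP [notJ1 notJ2]; rewrite /W /=.
    have [Ri | notRi] := boolP (i \in R).
      have iw : i != w by apply: contraNneq Rw => <-.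
      by rewrite bits (negbTE iw) -mulrDr dR ?mulr0.
    have x1 : (bit i a1 == x) = false.
      by apply/negbTE; apply: contraNneq notJ1 => <-; apply/imsetP; exists i; rewrite ?inE.
    have x2 : (bit i a2 == x) = false.
      have [iw | iw] := eqVneq i w; last by rewrite bits (negbTE iw) x1.
      by apply/negbTE; apply: contraNneq notJ2 => <-; rewrite iw.
    by rewrite x1 x2 !mul0r addr0.
  rewrite -(pair_big xpredT xpredT (fun i x => lam i x ^+ t * W (i, x))) /=.
  transitivity (\sum_i point j1 i ^+ t * d i j1 + \sum_i point j2 i ^+ t * d i j2); last first.
    by rewrite !code_power_sums ?addr0.
  rewrite -big_split /=; apply: eq_bigr => i _; rewrite big_bool /W /point /=.
  by case: (bit i a1); case: (bit i a2); rewrite /=; ring.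
split.
- by move=> i iw; have := W0 (i, bit i a1); rewrite /W /= bits (negbTE iw) eqxx -mulrDr mul1r.
- have := W0 (w, bit w a1); rewrite /W /= bits !eqxx.
  by case: (bit w a1); rewrite /= ?mulr1n ?mulr0n mul1r mul0r addr0.
- have := W0 (w, bit w a2); rewrite /W /= bits !eqxx.
  by case: (bit w a1); rewrite /= ?mulr1n ?mulr0n mul1r mul0r add0r.
Qed.

End Code.

Section Repair.
Variables (F : fieldType) (n k : nat) (lam : 'I_n -> bool -> F).
Hypothesis lam_inj : injective (fun p : 'I_n * bool => lam p.1 p.2).
Variables (R : {set 'I_n}) (u v : 'I_n).
Hypotheses (cR : #|R| = k.+1) (Ru : u \notin R) (Rv : v \notin R) (uv : u != v).
Local Notation l := (3 * 2 ^ n)%N.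
Local Notation code := (coop_code k lam).
Local Notation pos := (@pos n).

(* The pairs of symbols whose sums failed nodes u and v download. *)
Definition u_pair (a : nat) : 'I_l * 'I_l := (pos (bit u a) a, pos (bit u a) (flip u a)).
Definition v_pair (a : nat) : 'I_l * 'I_l := (pos 2 a, pos (~~ bit u a) (flip v a)).

Definition pairs_vanish (P : nat -> 'I_l * 'I_l) (d : 'M[F]_(n, l)) (j : 'I_n) : Prop :=
  forall a, (a < 2 ^ n)%N -> d j (P a).1 + d j (P a).2 = 0.

Lemma bool_lt3 (x : bool) : (x < 3)%N. Proof. by case: x. Qed.

Lemma flip_columns_eq0 (w : 'I_n) (b1 b2 a : nat) (d : 'M[F]_(n, l)) :
  code d -> w \notin R -> (b1 < 3)%N -> (b2 < 3)%N -> (a < 2 ^ n)%N ->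
  (forall j, j \in R -> d j (pos b1 a) + d j (pos b2 (flip w a)) = 0) ->
  [/\ forall i, i != w -> d i (pos b1 a) + d i (pos b2 (flip w a)) = 0,
      d w (pos b1 a) = 0 & d w (pos b2 (flip w a)) = 0].
Proof.
move=> code_d Rw lt_b1 lt_b2 lt_a; apply: (paired_columns_eq0 lam_inj code_d cR Rw) => i.
by rewrite !pos_mod ?flip_ltn // bit_flip.
Qed.

Lemma u_dl_zero d : code d -> (forall j, j \in R -> pairs_vanish u_pair d j) ->
  pairs_vanish u_pair d v /\ forall (x : bool) a, (a < 2 ^ n)%N -> d u (pos x a) = 0.
Proof.
move=> code_d dR; have uP a lt_a := flip_columns_eq0 code_d Ru (bool_lt3 (bit u a))
  (bool_lt3 (bit u a)) lt_a (fun j Rj => dR j Rj a lt_a).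
split=> [a lt_a | x a lt_a]; first by have [-> //] := uP a lt_a; rewrite eq_sym.
have [<- | x_neq] := eqVneq (bit u a) x; first by have [] := uP a lt_a.
have [_ _] := uP _ (flip_ltn (ltn_ord u) lt_a); rewrite flipK bit_flip eqxx.
by move: x_neq; case: x; case: (bit u a).
Qed.

Lemma v_dl_zero d : code d -> (forall j, j \in R -> pairs_vanish v_pair d j) ->
  pairs_vanish v_pair d u /\
  forall a, (a < 2 ^ n)%N -> d v (pos 2 a) = 0 /\ d v (pos (~~ bit u a) a) = 0.
Proof.
move=> code_d dR; have vP a lt_a := flip_columns_eq0 code_d Rv (erefl (2 < 3)%N)
  (bool_lt3 (~~ bit u a)) lt_a (fun j Rj => dR j Rj a lt_a).
split=> [a lt_a | a lt_a]; first by have [-> //] := vP a lt_a.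
have [_ -> _] := vP a lt_a; split=> //.
have [_ _] := vP _ (flip_ltn (ltn_ord v) lt_a); rewrite flipK bit_flip.
by have uv_nat : (u == v :> nat) = false := negbTE uv; rewrite uv_nat.
Qed.

Lemma u_recover d : code d -> (forall j, j \in R -> pairs_vanish u_pair d j) ->
  pairs_vanish v_pair d u -> row u d = 0.
Proof.
move=> code_d dR msg; have [_ d_u01] := u_dl_zero code_d dR.
apply/rowP => j; rewrite !mxE; move: j; apply: pos_cases => [x a lt_a | a lt_a].
  exact: d_u01.
by have := msg a lt_a; rewrite /= d_u01 ?addr0 // flip_ltn.
Qed.

Lemma v_recover d : code d -> (forall j, j \in R -> pairs_vanish v_pair d j) ->
  pairs_vanish u_pair d v -> row v d = 0.
Proof.
move=> code_d dR msg; have [_ d_v] := v_dl_zero code_d dR.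
apply/rowP => j; rewrite !mxE; move: j; apply: pos_cases => [x a lt_a | a lt_a].
  have [<- | x_neq] := eqVneq (bit u a) x; last first.
    have -> : x = ~~ bit u a by move: x_neq; case: x; case: (bit u a).
    by have [] := d_v a lt_a.
  have lt_a' := flip_ltn (ltn_ord u) lt_a.
  have := msg a lt_a; have [_ ] := d_v _ lt_a'; rewrite /= bit_flip eqxx /= negbK.
  by move=> ->; rewrite addr0.
by have [] := d_v a lt_a.
Qed.

End Repair.

Section CoopCodeScheme.
Variables (F : finFieldType) (n k : nat) (lam : 'I_n -> bool -> F).
Hypothesis lam_inj : injective (fun p : 'I_n * bool => lam p.1 p.2).
Variables (R : {set 'I_n}) (u v : 'I_n).
Hypotheses (cR : #|R| = k.+1) (Ru : u \notin R) (Rv : v \notin R) (uv : u != v).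
Local Notation l := (3 * 2 ^ n)%N.
Local Notation code := (coop_code k lam).

Definition pairs_of (i : 'I_n) : nat -> 'I_l * 'I_l :=
  if i == v then v_pair u v else u_pair u.

Definition pair_sums (P : nat -> 'I_l * 'I_l) (x : 'rV[F]_l) : seq F :=
  [seq x 0 (P a).1 + x 0 (P a).2 | a <- iota 0 (2 ^ n)].

Lemma pair_sums_rowP P (c1 c2 : 'M[F]_(n, l)) j :
  reflect (pairs_vanish P (c1 - c2) j) (pair_sums P (row j c1) == pair_sums P (row j c2)).
Proof.
apply: (iffP eqP) => [/eq_in_map eq12 a lt_a | c12_0].
  have := eq12 a; rewrite mem_iota add0n => /(_ lt_a) /eqP.
  by rewrite !mxE -subr_eq0 opprD addrACA => /eqP.
apply/eq_in_map => a; rewrite mem_iota add0n => /c12_0 /eqP.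
by rewrite !mxE addrACA -opprD subr_eq0 => /eqP.
Qed.

Definition coop_code_scheme : coop_scheme F n l :=
  decoding_scheme code [set u; v] R (fun _ _ => 2 ^ n)%N (fun _ i => pair_sums (pairs_of i))
    (fun _ _ => 2 ^ n)%N (fun i' i c => pair_sums (pairs_of i') (row i c)).

Lemma dl_from_pairs_vanish (c1 c2 : 'M[F]_(n, l)) i :
  dl_from R (fun _ i => pair_sums (pairs_of i)) c1 i =1
  dl_from R (fun _ i => pair_sums (pairs_of i)) c2 i ->
  forall j, j \in R -> pairs_vanish (pairs_of i) (c1 - c2) j.
Proof. by move=> eq12 j Rj; apply/pair_sums_rowP; move: (eq12 j); rewrite /dl_from Rj => ->. Qed.

Lemma coop_code_scheme_valid : valid_coop_scheme code [set u; v] R coop_code_scheme.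
Proof.
have pairs_u : pairs_of u = u_pair u by rewrite /pairs_of (negbTE uv).
have pairs_v : pairs_of v = v_pair u v by rewrite /pairs_of eqxx.
apply: decoding_scheme_valid => [i j x|i' i c|i i'|i].
- by rewrite size_map size_iota.
- by rewrite size_map size_iota.
- rewrite !inE => Fi Fi' i'i c1 c2 code1 code2 /dl_from_pairs_vanish d_dl.
  apply/eqP/pair_sums_rowP.
  have code_d := code_sub code1 code2.
  case/orP: Fi' i'i Fi d_dl => /eqP -> i'i; rewrite ?pairs_u ?pairs_v.
    by rewrite eq_sym (negbTE i'i) /= => /eqP -> /(u_dl_zero lam_inj cR Ru uv code_d) [].
  by rewrite orbC eq_sym (negbTE i'i) /= => /eqP -> /(v_dl_zero lam_inj cR Rv uv code_d) [].
- rewrite !inE => Fi c1 c2 code1 code2 /dl_from_pairs_vanish d_dl msg_eq; apply/eqP.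
  rewrite -subr_eq0 -linearB /=; apply/eqP.
  have code_d := code_sub code1 code2.
  case/orP: Fi d_dl msg_eq => /eqP -> d_dl msg_eq.
    apply: (u_recover lam_inj cR Ru uv code_d); first by rewrite -pairs_u.
    by apply/pair_sums_rowP; rewrite -pairs_v; apply/eqP/msg_eq; rewrite ?set22 // eq_sym.
  apply: (v_recover lam_inj cR Rv uv code_d); first by rewrite -pairs_v.
  by apply/pair_sums_rowP; rewrite -pairs_u; apply/eqP/msg_eq; rewrite ?set21.
Qed.

Lemma coop_code_scheme_bandwidth :
  coop_bandwidth [set u; v] R coop_code_scheme = (2 * (k + 2) * 2 ^ n)%N.
Proof.
rewrite (@coop_bandwidth_const _ _ _ _ _ _ (2 ^ n)%N (2 ^ n)%N) // cards2 uv cR.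
by rewrite /=; nia.
Qed.

End CoopCodeScheme.

Lemma combine_cut_bounds (k p Xu Xv gu gv : nat) : (0 < k)%N ->
  (k.+1 * (3 * p - gu) <= 2 * Xu)%N -> (k.+1 * (3 * p - gv) <= 2 * Xv)%N ->
  ((k - 1) * (k.+1 * (2 * (3 * p))) <= (k - 1) * (3 * (Xu + Xv)))%N ->
  (2 * (k + 2) * p <= Xu + Xv + (gu + gv))%N.
Proof.
(* The factor k - 1 makes the bound from triples of helpers vacuous when k = 1. *)
move=> k_gt0 hu hv huv.
have h : (2 * (k.+1 * (3 * p)) <= 2 * (Xu + Xv) + k.+1 * (gu + gv))%N by nia.
by rewrite -(@leq_pmul2l (3 * k.+1)) //; nia.
Qed.

Section CoopCodeLowerBound.
Variables (F : finFieldType) (n k : nat) (lam : 'I_n -> bool -> F).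
Hypothesis lam_inj : injective (fun p : 'I_n * bool => lam p.1 p.2).
Variables (Fs R : {set 'I_n}) (S : coop_scheme F n (3 * 2 ^ n)).
Hypotheses (S_valid : valid_coop_scheme (coop_code k lam) Fs R S) (cR : #|R| = k.+1).
Local Notation l := (3 * 2 ^ n)%N.

Lemma card_helpers_out (T : {set 'I_n}) :
  T \subset R -> (#|R :\: T| = k.+1 - #|T| /\ #|T| <= k.+1)%N.
Proof. by move=> TR; rewrite cardsD (setIidPr TR) -cR subset_leq_card. Qed.

Lemma cut_one (i i' : 'I_n) (T : {set 'I_n}) :
  Fs = [set i; i'] -> i \notin R -> T \subset R -> #|T| = 2%N ->
  (l <= \sum_(j in T) dl_size S j i + ex_size S i' i)%N.
Proof.
move=> eFs Ri TR cT; have [_ [size_ex _]] := S_valid.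
pose K := i |: (R :\: T).
have cK : #|K| = k.
  have [cRT le_Tk] := card_helpers_out TR.
  by rewrite cardsU1 inE (negbTE Ri) andbF cRT cT /=; move: le_Tk; rewrite cT; lia.
pose X (x : 'rV[F]_l) : 'M[F]_(n, l) := \matrix_i0 (if i0 == i then x else 0).
have /fin_all_exists [cw cw_spec] (x : 'rV[F]_l) := code_extend lam_inj (X x) cK.
have row_i x : row i (cw x) = x by rewrite (proj2 (cw_spec x)) ?setU11 // rowK eqxx.
have row_out x j : j \in R :\: T -> row j (cw x) = 0.
  move=> RTj; rewrite (proj2 (cw_spec x)) ?rowK ?in_setU1 ?RTj ?orbT //.
  by case: eqP => // ji; move: RTj Ri; rewrite ji inE => /andP [_ ->].
(* cw x vanishes on the helpers outside T and has row i equal to x, so the repair of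
   node i recovers x from phi x. *)
pose phi x := dl_obs S T i (cw x) ++ ex S i' i (downloaded S R (cw x) i').
have phi_inj : injective phi.
  move=> x y /eqP; rewrite eqseq_cat ?(size_dl_obs S_valid) // => /andP [/eqP obs /eqP ex_eq].
  rewrite -(row_i x) -(row_i y); apply: (repair_row_eq S_valid) => //.
  - exact: (proj1 (cw_spec x)).
  - exact: (proj1 (cw_spec y)).
  - by rewrite eFs set21.
  - by apply: (dl_obs_downloaded S_valid _ obs) => j RTj; rewrite !row_out.
  by move=> i''; rewrite eFs !inE => /orP [/eqP -> /eqP //|/eqP -> _].
have size_phi x : size (phi x) = (\sum_(j in T) dl_size S j i + ex_size S i' i)%N.
  by rewrite size_cat (size_dl_obs S_valid) size_ex.
have := leq_card_seq size_phi phi_inj.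
by rewrite card_mx mul1n leq_exp2l // card_finNzRing_gt1.
Qed.

Lemma cut_two (u v : 'I_n) (T : {set 'I_n}) :
  Fs = [set u; v] -> u != v -> u \notin R -> v \notin R -> T \subset R -> #|T| = 3%N ->
  (2 * l <= \sum_(j in T) (dl_size S j u + dl_size S j v))%N.
Proof.
move=> eFs uv Ru Rv TR cT.
pose K := u |: (v |: (R :\: T)).
have cK : #|K| = k.
  have [cRT le_Tk] := card_helpers_out TR.
  rewrite cardsU1 cardsU1 !inE negb_or uv (negbTE Ru) (negbTE Rv) !andbF cRT cT /=.
  by move: le_Tk; rewrite cT; lia.
pose X (x : 'rV[F]_l * 'rV[F]_l) : 'M[F]_(n, l) :=
  \matrix_i0 (if i0 == u then x.1 else if i0 == v then x.2 else 0).
have /fin_all_exists [cw cw_spec] x := code_extend lam_inj (X x) cK.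
have row_u x : row u (cw x) = x.1 by rewrite (proj2 (cw_spec x)) ?setU11 // rowK eqxx.
have row_v x : row v (cw x) = x.2.
  have vu : (v == u) = false by rewrite eq_sym (negbTE uv).
  by rewrite (proj2 (cw_spec x)) ?rowK ?vu ?eqxx // !inE eqxx orbT.
have row_out x j : j \in R :\: T -> row j (cw x) = 0.
  move=> RTj; have Rj : j \in R by move: RTj; rewrite inE => /andP [].
  have [ju jv] : j != u /\ j != v by split; apply: contraTneq Rj => ->.
  by rewrite (proj2 (cw_spec x)) ?rowK ?(negbTE ju) ?(negbTE jv) // !in_setU1 RTj !orbT.
pose phi x := dl_obs S T u (cw x) ++ dl_obs S T v (cw x).
have phi_inj : injective phi.
  move=> x y /eqP; rewrite eqseq_cat ?(size_dl_obs S_valid) // => /andP [/eqP obs_u /eqP obs_v].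
  have out_eq j : j \in R :\: T -> row j (cw x) = row j (cw y) by move=> RTj; rewrite !row_out.
  have dl_eq := dl_obs_downloaded S_valid out_eq.
  have dl_Fs i : i \in Fs -> downloaded S R (cw x) i = downloaded S R (cw y) i.
    by rewrite eFs !inE => /orP [] /eqP ->; apply: dl_eq.
  have rec_eq i : i \in Fs -> row i (cw x) = row i (cw y).
    move=> Fi; apply: (repair_row_eq S_valid) => //; try exact: (proj1 (cw_spec _)).
      exact: dl_Fs.
    by move=> i' Fi' _; rewrite dl_Fs.
  apply: injective_projections; [rewrite -(row_u x) -(row_u y) | rewrite -(row_v x) -(row_v y)].
    by rewrite rec_eq // eFs set21.
  by rewrite rec_eq // eFs set22.
have size_phi x : size (phi x) = (\sum_(j in T) dl_size S j u + \sum_(j in T) dl_size S j v)%N.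
  by rewrite size_cat !(size_dl_obs S_valid).
have := leq_card_seq size_phi phi_inj.
by rewrite big_split card_prod card_mx mul1n -expnD leq_exp2l ?card_finNzRing_gt1 // addnn -mul2n.
Qed.

Lemma coop_code_bandwidth_lb (u v : 'I_n) :
  Fs = [set u; v] -> u != v -> u \notin R -> v \notin R -> (0 < k)%N ->
  (2 * (k + 2) * 2 ^ n <= coop_bandwidth Fs R S)%N.
Proof.
move=> eFs uv Ru Rv k_gt0.
have sum_Fs (f : 'I_n -> nat) : (\sum_(i in Fs) f i = f u + f v)%N.
  by rewrite eFs big_setU1 ?big_set1 // inE.
have vu : v != u by rewrite eq_sym.
rewrite /coop_bandwidth !sum_Fs !big_mkcondr !sum_Fs /= !eqxx uv vu /= add0n addn0.
set Fu := (\sum_(j in R) dl_size S j u)%N; set Fv := (\sum_(j in R) dl_size S j v)%N.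
have avg_u : (k.+1 * (l - ex_size S v u) <= 2 * Fu)%N.
  rewrite -cR; apply: subset_sum_average => [|T TR cT]; first by rewrite cR ltnS.
  by rewrite leq_subLR addnC; apply: cut_one eFs Ru TR cT.
have avg_v : (k.+1 * (l - ex_size S u v) <= 2 * Fv)%N.
  rewrite -cR; apply: subset_sum_average => [|T TR cT]; first by rewrite cR ltnS.
  by rewrite leq_subLR addnC; apply: cut_one _ Rv TR cT; rewrite eFs setUC.
have avg_uv : ((k - 1) * (k.+1 * (2 * l)) <= (k - 1) * (3 * (Fu + Fv)))%N.
  have [k_gt1 | k_le1] := ltnP 1 k; last by have -> : (k - 1 = 0)%N by lia.
  rewrite leq_mul2l -cR -big_split /=; apply/orP; right.
  apply: subset_sum_average => [|T TR cT]; first by rewrite cR ltnS.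
  exact: cut_two eFs uv Ru Rv TR cT.
exact: combine_cut_bounds avg_u avg_v avg_uv.
Qed.

End CoopCodeLowerBound.

Theorem mainTheorem1 (F : finFieldType) (n k : nat) (lam : 'I_n -> bool -> F) :
  (1 <= k)%N -> (k < n)%N -> (2 * n <= #|F|)%N ->
  injective (fun p : 'I_n * bool => lam p.1 p.2) ->
  coop_MSR k 2 k.+1 (coop_code k lam) /\
  (forall Fs Rs : {set 'I_n}, #|Fs| = 2%N -> [disjoint Fs & Rs] -> #|Rs| = k.+1 ->
     is_N_co (coop_code k lam) Fs Rs (2 * (k + 2) * 2 ^ n)%N).
Proof.
(* [2 * n <= #|F|] already follows from the injectivity of lam. *)
move=> k_gt0 lt_kn _ lam_inj.
have N_co (Fs Rs : {set 'I_n}) : #|Fs| = 2%N -> [disjoint Fs & Rs] -> #|Rs| = k.+1 ->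
    is_N_co (coop_code k lam) Fs Rs (2 * (k + 2) * 2 ^ n)%N.
  move=> /eqP /cards2P [u [v [uv ->]]] dis cR.
  have Ru : u \notin Rs by rewrite (disjointFr dis) // set21.
  have Rv : v \notin Rs by rewrite (disjointFr dis) // set22.
  split; first exists (coop_code_scheme k lam Rs u v).
    by split; [apply: coop_code_scheme_valid | apply: coop_code_scheme_bandwidth].
  by move=> S S_valid; exact: (coop_code_bandwidth_lb lam_inj S_valid cR erefl uv Ru Rv k_gt0).
split=> //; split; first exact: code_MDS lam_inj (ltnW lt_kn).
move=> Fs Rs cF dis cR; exists (2 * (k + 2) * 2 ^ n)%N; split; first exact: N_co.
nia.
Qed.
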